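(* Let $L\subset\mathbf{R}^n$ be an $n$-dimensional lattice and let $H$ be a lamina of $L$. Consider the family of parallel laminae $\{H+v: v\in L\}$, which partitions $L$ into parallel layers. Then every Delaunay polytope of $L$ lies between two neighboring hyperplanes of this family, and all its vertices lie on these two hyperplanes.
   Context: An empty sphere is a sphere with no lattice point in its interior; a Delaunay polytope of $L$ is the convex hull of all lattice points lying on an empty sphere, when this hull is $n$-dimensional; Delaunay polytopes form the Delaunay partition of $\mathbf{R}^n$. A hyperplane $H$ such that $H\cap L$ is an $(n-1)$-dimensional sub-lattice of $L$ is a lamina of $L$ if every $(n-1)$-dimensional Delaunay polytope of the lattice $L\cap H$ (within $H$) is a facet of a Delaunay polytope of $L$, i.e. $H$ is partitioned into facets of Delaunay polytopes of $L$. Two hyperplanes of the family $\{H+v:v\in L\}$ are neighboring if no hyperplane of the family lies strictly between them. *)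

From HB Require Import structures.
From mathcomp Require Import all_boot all_order all_algebra.
From mathcomp Require Import reals.
Set Implicit Arguments. Unset Strict Implicit. Unset Printing Implicit Defensive.
Import Order.TTheory GRing.Theory Num.Theory.
Local Open Scope ring_scope.

Section Defs.
Variables (R : realType) (n : nat).
Notation pt := 'rV[R]_n.

Definition dotv (u v : pt) : R := (u *m v^T) 0 0.

Definition lattice_of (B : 'M[R]_n) : pt -> Prop :=
  fun x => exists z : 'rV[int]_n, x = map_mx (fun k : int => k%:~R) z *m B.

Definition conv (S : pt -> Prop) : pt -> Prop :=
  fun x => exists (k : nat) (p : 'I_k -> pt) (w : 'I_k -> R),
    (forall i, S (p i)) /\ (forall i, 0 <= w i) /\
    \sum_(i < k) w i = 1 /\ x = \sum_(i < k) w i *: p i.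

Definition affdim_ge (S : pt -> Prop) (k : nat) : Prop :=
  exists p : 'I_k.+1 -> pt, (forall i, S (p i)) /\
    row_free (\matrix_(i < k) (p (lift ord0 i) - p ord0)).

Definition sphere_pts (S : pt -> Prop) (c : pt) (r : R) : pt -> Prop :=
  fun x => S x /\ dotv (x - c) (x - c) = r ^+ 2.

Definition empty_sphere (S : pt -> Prop) (c : pt) (r : R) : Prop :=
  0 <= r /\ forall x, S x -> r ^+ 2 <= dotv (x - c) (x - c).

(* P is a k-dimensional Delaunay polytope of the point set S, inside the
   ambient affine space E (the center of the empty sphere lies in E) *)
Definition delaunay_in (E S : pt -> Prop) (k : nat) (P : pt -> Prop) : Prop :=
  exists (c : pt) (r : R), E c /\ empty_sphere S c r /\
    affdim_ge (sphere_pts S c r) k /\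
    (forall x, P x <-> conv (sphere_pts S c r) x).

Definition hyperplane (a : pt) (b : R) : pt -> Prop := fun x => dotv a x = b.

Definition is_face (Q P : pt -> Prop) : Prop :=
  exists (a : pt) (b : R), a != 0 /\ (forall x, P x -> dotv a x <= b) /\
    (forall x, Q x <-> (P x /\ dotv a x = b)).

Definition is_facet (Q P : pt -> Prop) : Prop := is_face Q P /\ affdim_ge Q n.-1.

Definition lamina (B : 'M[R]_n) (a : pt) : Prop :=
  let L := lattice_of B in
  let H := hyperplane a 0 in
  a != 0 /\
  affdim_ge (fun x => L x /\ H x) n.-1 /\
  (forall Q, delaunay_in H (fun x => L x /\ H x) n.-1 Q ->
     exists P, delaunay_in (fun _ => True) L n P /\ is_facet Q P).

Definition vertex (P : pt -> Prop) (x : pt) : Prop :=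
  P x /\ forall y z (t : R), P y -> P z -> 0 < t < 1 ->
    x = t *: y + (1 - t) *: z -> y = z.

End Defs.

(* Lift points to the paraboloid x |-> x.x: a sphere becomes an affine function,
   empty when it stays below the paraboloid on the lattice, and its vertices are
   the lattice points where the two meet.  Suppose an empty sphere of L had
   vertices x and y strictly on both sides of the lamina H (after a lattice
   translation), and let z be the point of [x, y] on H.  Restrict its affine
   function to H and raise it, staying below the paraboloid on L /\ H and never
   decreasing at z, until it meets n affinely independent points of L /\ H: this
   gives a Delaunay polytope Q of L /\ H.  As H is a lamina, Q is a facet of a
   Delaunay polytope P' of L; the affine function of P' agrees with that of Q on
   H, and all vertices of P' lie on one side of H.  The difference of the affine
   functions of P' and of the original sphere is then >= 0 at z and <= 0 at x
   and y, so it vanishes at x and y: both are vertices of P', on opposite sides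
   of H, a contradiction.  Hence the vertices of a Delaunay polytope lie on two
   neighbouring layers, and so does their convex hull. *)

From HB Require Import structures.
From mathcomp Require Import all_boot all_order all_algebra.
From mathcomp Require Import reals lra ring zify.
From Stdlib Require Import Classical.
Set Implicit Arguments. Unset Strict Implicit. Unset Printing Implicit Defensive.
Import Order.TTheory GRing.Theory Num.Theory.
Local Open Scope ring_scope.

Section InnerProduct.
Variables (R : realType) (n : nat).
Implicit Types u v w : 'rV[R]_n.

Lemma dotvE u v : dotv u v = \sum_j u 0 j * v 0 j.
Proof. by rewrite /dotv mxE; apply: eq_bigr => j _; rewrite mxE. Qed.

Lemma dotvC u v : dotv u v = dotv v u.
Proof. by rewrite !dotvE; apply: eq_bigr => j _; rewrite mulrC. Qed.

Lemma dotvDl u v w : dotv (u + v) w = dotv u w + dotv v w.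
Proof. by rewrite !dotvE -big_split; apply: eq_bigr => j _; rewrite mxE mulrDl. Qed.

Lemma dotvZl (k : R) u v : dotv (k *: u) v = k * dotv u v.
Proof. by rewrite !dotvE mulr_sumr; apply: eq_bigr => j _; rewrite mxE mulrA. Qed.

Lemma dotvNl u v : dotv (- u) v = - dotv u v.
Proof. by rewrite -scaleN1r dotvZl mulN1r. Qed.

Lemma dotvBl u v w : dotv (u - v) w = dotv u w - dotv v w.
Proof. by rewrite dotvDl dotvNl. Qed.

Lemma dotv0l v : dotv 0 v = 0.
Proof. by rewrite -(scale0r 0) dotvZl mul0r. Qed.

Lemma dotvDr u v w : dotv w (u + v) = dotv w u + dotv w v.
Proof. by rewrite !(dotvC w) dotvDl. Qed.

Lemma dotvZr (k : R) u v : dotv v (k *: u) = k * dotv v u.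
Proof. by rewrite !(dotvC v) dotvZl. Qed.

Lemma dotvNr u v : dotv v (- u) = - dotv v u.
Proof. by rewrite !(dotvC v) dotvNl. Qed.

Lemma dotvBr u v w : dotv w (u - v) = dotv w u - dotv w v.
Proof. by rewrite !(dotvC w) dotvBl. Qed.

Lemma dotv0r v : dotv v 0 = 0.
Proof. by rewrite dotvC dotv0l. Qed.

Lemma dotv_suml k (F : 'I_k -> 'rV[R]_n) v :
  dotv (\sum_(i < k) F i) v = \sum_(i < k) dotv (F i) v.
Proof. by elim/big_ind2: _ => [|x1 x2 y1 y2 <- <-|]; rewrite ?dotv0l ?dotvDl. Qed.

Lemma dotv_sumr k (F : 'I_k -> 'rV[R]_n) v :
  dotv v (\sum_(i < k) F i) = \sum_(i < k) dotv v (F i).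
Proof. by rewrite dotvC dotv_suml; apply: eq_bigr => i _; rewrite dotvC. Qed.

Lemma dotvv_ge0 v : 0 <= dotv v v.
Proof. by rewrite dotvE sumr_ge0 // => j _; rewrite -expr2 sqr_ge0. Qed.

Lemma dotvv_eq0 v : (dotv v v == 0) = (v == 0).
Proof.
apply/idP/idP => [|/eqP->]; last by rewrite dotv0l.
rewrite dotvE psumr_eq0 => [/allP v0|j _]; last by rewrite -expr2 sqr_ge0.
apply/eqP/matrixP => i j; rewrite (ord1 i) mxE.
by have := v0 j (mem_index_enum _); rewrite -expr2 sqrf_eq0 => /eqP.
Qed.

Lemma dotv_sqrB u v : dotv (u - v) (u - v) = dotv u u - 2 * dotv v u + dotv v v.
Proof. by rewrite !dotvBl !dotvBr (dotvC u v); ring. Qed.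

Lemma dotv2_le u v : 2 * dotv u v <= dotv u u + dotv v v.
Proof. by have := dotvv_ge0 (u - v); rewrite dotv_sqrB (dotvC v u); lra. Qed.

End InnerProduct.

Section Independence.
Variables (R : realType) (n : nat).
Notation pt := 'rV[R]_n.

Definition indep k (f : 'I_k -> pt) :=
  forall al : 'I_k -> R, \sum_i al i *: f i = 0 -> forall i, al i = 0.

Lemma mulmx_rowfun k (x : 'rV[R]_k) (f : 'I_k -> pt) :
  x *m (\matrix_(i < k) f i) = \sum_i x 0 i *: f i.
Proof. by rewrite mulmx_sum_row; apply: eq_bigr => i _; rewrite rowK. Qed.

Lemma row_free_indep k (f : 'I_k -> pt) : row_free (\matrix_(i < k) f i) <-> indep f.
Proof.
split=> [free_f al al0 i | indep_f].
  have : \row_j al j *m \matrix_(i < k) f i = 0 *m \matrix_(i < k) f i.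
    by rewrite mulmx_rowfun mul0mx -[RHS]al0; apply: eq_bigr => j _; rewrite mxE.
  by move/(row_free_inj free_f)/matrixP/(_ 0 i); rewrite !mxE.
apply: inj_row_free => x; rewrite mulmx_rowfun => /indep_f x0.
by apply/matrixP => i j; rewrite (ord1 i) mxE x0.
Qed.

Lemma orth_vector_exists k (g : 'I_k -> pt) : (k < n)%N ->
  exists2 d : pt, d != 0 & forall i, dotv d (g i) = 0.
Proof.
move=> lt_kn; have : ~~ row_free (\matrix_(i < k) g i)^T.
  by rewrite /row_free neq_ltn (leq_ltn_trans (rank_leq_col _)).
rewrite -kermx_eq0 => /rowV0Pn [d /sub_kermxP dg0 d0]; exists d => // i.
move/matrixP: dg0 => /(_ 0 i); rewrite !mxE => <-.
by rewrite dotvE; apply: eq_bigr => j _; rewrite !mxE.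
Qed.

Lemma indep_orth0 (g : 'I_n -> pt) w : indep g ->
  (forall i, dotv (g i) w = 0) -> w = 0.
Proof.
move=> /row_free_indep; rewrite row_free_unit => g_unit gw0.
have : (\matrix_(i < n) g i) *m w^T = 0.
  apply/matrixP => i j; rewrite (ord1 j) [RHS]mxE -(gw0 i) dotvE mxE.
  by apply: eq_bigr => l _; rewrite !mxE.
move/(congr1 (mulmx (invmx (\matrix_(i < n) g i)))); rewrite mulKmx // mulmx0.
by rewrite -trmx0 => /trmx_inj.
Qed.

Definition rcons_fam k (f : 'I_k -> pt) (v : pt) : 'I_k.+1 -> pt :=
  fun i => if unlift ord_max i is Some j then f j else v.

Lemma rcons_fam_max k f v : @rcons_fam k f v ord_max = v.
Proof. by rewrite /rcons_fam unlift_none. Qed.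

Lemma rcons_fam_lift k f v (i : 'I_k) : @rcons_fam k f v (lift ord_max i) = f i.
Proof. by rewrite /rcons_fam liftK. Qed.

Lemma rcons_famP k f v (P : pt -> Prop) :
  (forall i, P (f i)) -> P v -> forall i, P (@rcons_fam k f v i).
Proof. by move=> Pf Pv i; rewrite /rcons_fam; case: unliftP. Qed.

Lemma indep_rcons k (f : 'I_k -> pt) v d :
  indep f -> (forall i, dotv d (f i) = 0) -> dotv d v != 0 -> indep (rcons_fam f v).
Proof.
move=> indep_f df0 dv0 al; rewrite big_ord_recr /= rcons_fam_max.
have widen_lift j : widen_ord (leqnSn k) j = lift ord_max j.
  by apply: val_inj; rewrite /= /bump leqNgt ltn_ord.
under eq_bigr do rewrite widen_lift rcons_fam_lift.
move=> sum0; have al_max0 : al ord_max = 0.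
  move/(congr1 (dotv d)): sum0; rewrite dotvDr dotv_sumr dotv0r big1 ?add0r.
    by rewrite dotvZr => /eqP; rewrite mulf_eq0 (negbTE dv0) orbF => /eqP.
  by move=> i _; rewrite dotvZr df0 mulr0.
move: sum0; rewrite al_max0 scale0r addr0 => /indep_f alf0 i.
by case: (unliftP ord_max i) => [j ->|->] //; rewrite -widen_lift.
Qed.

End Independence.

Lemma orth_indep_colinear (R : realType) m (a : 'rV[R]_m.+1) (f : 'I_m -> 'rV[R]_m.+1) w :
  a != 0 -> indep f -> (forall i, dotv a (f i) = 0) -> (forall i, dotv w (f i) = 0) ->
  w = (dotv w a / dotv a a) *: a.
Proof.
move=> a0 indep_f af0 wf0; have aa0 : dotv a a != 0 by rewrite dotvv_eq0.
apply/eqP; rewrite -subr_eq0; apply/eqP.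
apply: (indep_orth0 (indep_rcons indep_f af0 aa0)) => i.
rewrite /rcons_fam; case: unliftP => [j _|_]; rewrite dotvBr dotvZr.
  by rewrite !(dotvC (f j)) wf0 af0 mulr0 subr0.
by rewrite (dotvC a w) mulfVK // subrr.
Qed.

Section Convexity.
Variables (R : realType) (n : nat).
Notation pt := 'rV[R]_n.
Implicit Types S P : pt -> Prop.

Lemma mem_conv S x : S x -> conv S x.
Proof.
by move=> Sx; exists 1%N, (fun _ => x), (fun _ => 1); rewrite !big_ord1 scale1r.
Qed.

Lemma conv_dotv_bounds S (a : pt) lo hi x :
  (forall y, S y -> lo <= dotv a y <= hi) -> conv S x -> lo <= dotv a x <= hi.
Proof.
move=> Sb [k [p [w [Sp [w_ge0 [w1 ->]]]]]].
rewrite dotv_sumr; under eq_bigr do rewrite dotvZr.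
rewrite -[lo]mul1r -[hi]mul1r -w1 !mulr_suml; apply/andP; split; apply: ler_sum => i _;
  by rewrite ler_wpM2l //; case/andP: (Sb _ (Sp i)).
Qed.

Lemma dotv_conv_le k (w : 'I_k -> R) (q : 'I_k -> pt) :
  (forall i, 0 <= w i) -> \sum_i w i = 1 ->
  dotv (\sum_i w i *: q i) (\sum_i w i *: q i) <= \sum_i w i * dotv (q i) (q i).
Proof.
move=> w_ge0 w1; set y := \sum_i w i *: q i.
have spread : \sum_i w i * dotv (q i - y) (q i - y) =
              \sum_i w i * dotv (q i) (q i) - dotv y y.
  under eq_bigr do rewrite dotv_sqrB mulrDr mulrBr mulrA (mulrC _ 2) -mulrA.
  rewrite big_split sumrB /= -!mulr_sumr -mulr_suml w1.
  have -> : \sum_i w i * dotv y (q i) = dotv y y.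
    by rewrite {3}/y dotv_sumr; apply: eq_bigr => i _; rewrite dotvZr.
  ring.
have : 0 <= \sum_i w i * dotv (q i - y) (q i - y).
  by apply: sumr_ge0 => i _; rewrite mulr_ge0 // dotvv_ge0.
rewrite spread; lra.
Qed.

Lemma conv_ball S c rho x :
  (forall y, S y -> dotv (y - c) (y - c) <= rho) -> conv S x ->
  dotv (x - c) (x - c) <= rho.
Proof.
move=> Sb [k [p [w [Sp [w_ge0 [w1 ->]]]]]].
have -> : \sum_i w i *: p i - c = \sum_i w i *: (p i - c).
  by under [RHS]eq_bigr do rewrite scalerBr; rewrite sumrB -scaler_suml w1 scale1r.
apply: le_trans (dotv_conv_le _ w_ge0 w1) _.
rewrite -[rho]mul1r -w1 mulr_suml; apply: ler_sum => i _.
by rewrite ler_wpM2l // Sb.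
Qed.

Lemma conv_peel S k (p : 'I_k -> pt) (w : 'I_k -> R) i :
  (forall j, S (p j)) -> (forall j, 0 <= w j) -> \sum_j w j = 1 -> w i < 1 ->
  exists2 y, conv S y & \sum_j w j *: p j = w i *: p i + (1 - w i) *: y.
Proof.
move=> Sp w_ge0 w1 wi_lt1; have rest_gt0 : 0 < 1 - w i by rewrite subr_gt0.
have restE : 1 - w i = \sum_(j | j != i) w j by rewrite -w1 (bigD1 i) //= addrC addrK.
pose w' j := if j != i then w j / (1 - w i) else 0.
have w'_sum F : \sum_j w' j *: F j = (1 - w i)^-1 *: \sum_(j | j != i) w j *: F j.
  rewrite (bigD1 i) //= /w' eqxx scale0r add0r scaler_sumr.
  by apply: eq_bigr => j ->; rewrite scalerA mulrC.
exists (\sum_j w' j *: p j).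
  exists k, p, w'; split=> //; split=> [j|].
    by rewrite /w'; case: ifP => // _; rewrite divr_ge0 // ltW.
  split=> //; rewrite (bigD1 i) //= /w' eqxx add0r.
  by under eq_bigr => j -> do []; rewrite -mulr_suml -restE divff ?gt_eqF.
by rewrite w'_sum scalerA divff ?gt_eqF // scale1r (bigD1 i).
Qed.

Lemma vertex_conv_mem S P x :
  (forall y, conv S y -> P y) -> vertex P x -> conv S x -> S x.
Proof.
move=> convSP [_ extr_x] [k [p [w [Sp [w_ge0 [w1 x_def]]]]]].
have [i wi_gt0] : exists i, 0 < w i.
  apply: NNPP => no_pos; have : \sum_i w i <= 0.
    by apply: sumr_le0 => i _; rewrite leNgt; apply/negP => wi; apply: no_pos; exists i.
  by rewrite w1 ler10.
have [wi_lt1|wi_ge1] := ltrP (w i) 1.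
  have [y conv_y x_split] := conv_peel Sp w_ge0 w1 wi_lt1; rewrite x_split in x_def.
  have pi_y : p i = y.
    apply: (extr_x _ _ (w i)) => //; [exact/convSP/mem_conv | exact: convSP |].
    by rewrite wi_gt0 wi_lt1.
  by rewrite x_def -pi_y -scalerDl addrC subrK scale1r.
have rest0 : \sum_(j | j != i) w j = 0.
  apply/eqP; rewrite eq_le sumr_ge0 // andbT; move: w1; rewrite (bigD1 i) //=; lra.
have wi1 : w i = 1 by move: w1; rewrite (bigD1 i) //= rest0 addr0.
rewrite x_def (bigD1 i) //= wi1 scale1r big1 ?addr0 // => j ji.
move/eqP: rest0; rewrite psumr_eq0 // => /allP/(_ j (mem_index_enum _)).
by rewrite ji => /eqP ->; rewrite scale0r.
Qed.

Lemma segment_meets_hyperplane (a x y : pt) : dotv a x < 0 -> 0 < dotv a y ->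
  exists t, 0 < t < 1 /\ dotv a (t *: x + (1 - t) *: y) = 0.
Proof.
move=> ax ay; have D_gt0 : 0 < dotv a y - dotv a x by lra.
exists (dotv a y / (dotv a y - dotv a x)); rewrite dotvDr !dotvZr; split.
  by rewrite divr_gt0 //= ltr_pdivrMr //; lra.
by field; rewrite gt_eqF.
Qed.

Lemma affine_zero_on_segment (w x y : pt) gamma t : 0 < t < 1 ->
  dotv w x + gamma <= 0 -> dotv w y + gamma <= 0 ->
  0 <= dotv w (t *: x + (1 - t) *: y) + gamma ->
  dotv w x + gamma = 0 /\ dotv w y + gamma = 0.
Proof.
move=> /andP [t_gt0 t_lt1] wx wy; rewrite dotvDr !dotvZr => wz.
have : 0 <= t * (dotv w x + gamma) + (1 - t) * (dotv w y + gamma) by lra.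
by split; nra.
Qed.

End Convexity.

Section Lift.
Variables (R : realType) (n : nat).
Notation pt := 'rV[R]_n.
Implicit Types (S E : pt -> Prop) (u c x : pt) (beta r : R).

(* The sphere of centre [c] and radius [r] is encoded by the affine map
   [x |-> 2c.x + (r^2 - c.c)], which lies below the paraboloid [x |-> x.x]
   exactly outside the ball ([dotv_sqr_center]). *)
Definition empty_lift S u beta := forall l, S l -> dotv u l + beta <= dotv l l.
Definition on_lift u beta x := dotv u x + beta = dotv x x.

Definition lift_center u : pt := 2^-1 *: u.
Definition lift_radius u beta : R := Num.sqrt (beta + dotv u u / 4).

Lemma affdim_geP S k : affdim_ge S k <->
  exists s0 (f : 'I_k -> pt), [/\ S s0, forall i, S (s0 + f i) & indep f].
Proof.
split=> [[p [Sp free_p]]|[s0 [f [Ss0 Sf indep_f]]]].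
  exists (p ord0), (fun i => p (lift ord0 i) - p ord0); split=> // [i|].
    by rewrite addrC subrK.
  by apply/row_free_indep.
exists (fun j => if unlift ord0 j is Some i then s0 + f i else s0); split.
  by move=> j; case: unliftP.
apply/row_free_indep => al; under eq_bigr do rewrite liftK unlift_none addrC addKr.
exact: indep_f.
Qed.

Lemma affdim_full_not_level S (a : pt) : a != 0 -> affdim_ge S n ->
  exists x y, [/\ S x, S y & dotv a x < dotv a y].
Proof.
move=> a_neq0 /affdim_geP [s0 [f [Ss0 Sf indep_f]]].
have [i af_neq0] : exists i, dotv a (f i) != 0.
  apply: NNPP => af0; move/eqP: a_neq0; apply; apply: indep_orth0 indep_f _ => i.
  by rewrite dotvC; apply/eqP; apply: contraT => af; case: af0; exists i.
have [af_neg|af_pos] := ltrP (dotv a (f i)) 0.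
  by exists (s0 + f i), s0; rewrite dotvDr gtrDl.
by exists s0, (s0 + f i); rewrite dotvDr ltrDl lt_neqAle eq_sym af_neq0.
Qed.

Lemma affdim_ge_sub S1 S2 k :
  (forall x, S1 x -> S2 x) -> affdim_ge S1 k -> affdim_ge S2 k.
Proof. by move=> S12 [p [S1p free_p]]; exists p; split=> // i; apply: S12. Qed.

Lemma dotv_sqr_center c r x :
  dotv (x - c) (x - c) - r ^+ 2 = dotv x x - (dotv (2 *: c) x + (r ^+ 2 - dotv c c)).
Proof. by rewrite dotv_sqrB dotvZl; ring. Qed.

Lemma empty_sphere_lift S c r :
  empty_sphere S c r -> empty_lift S (2 *: c) (r ^+ 2 - dotv c c).
Proof.
by move=> [_ emptySc] l /emptySc; rewrite -subr_ge0 dotv_sqr_center subr_ge0.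
Qed.

Lemma sphere_pts_lift S c r x :
  sphere_pts S c r x <-> S x /\ on_lift (2 *: c) (r ^+ 2 - dotv c c) x.
Proof.
rewrite /sphere_pts /on_lift; have := dotv_sqr_center c r x.
by split=> -[Sx e]; split=> //; lra.
Qed.

Lemma lift_sqr_center u beta q x : on_lift u beta q ->
  dotv (x - lift_center u) (x - lift_center u) - lift_radius u beta ^+ 2 =
  dotv x x - (dotv u x + beta).
Proof.
move=> q_on; have radius2 : lift_radius u beta ^+ 2 = beta + dotv u u / 4.
  apply: sqr_sqrtr; have := dotvv_ge0 (q - lift_center u).
  by rewrite dotv_sqrB /lift_center !dotvZl dotvZr; move: q_on; rewrite /on_lift; lra.
by rewrite radius2 dotv_sqrB /lift_center !dotvZl dotvZr; field.
Qed.

Lemma delaunay_of_lift E S k u beta :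
  E (lift_center u) -> empty_lift S u beta ->
  affdim_ge (fun x => S x /\ on_lift u beta x) k ->
  delaunay_in E S k (conv (sphere_pts S (lift_center u) (lift_radius u beta))).
Proof.
move=> Ec empty_u dim_on; have [p [on_p _]] := dim_on; have [_ q_on] := on_p ord0.
have center_eq x := lift_sqr_center x q_on.
exists (lift_center u), (lift_radius u beta); split=> //; split; last split=> //.
  split=> [|l Sl]; first exact: sqrtr_ge0.
  by have := empty_u l Sl; have := center_eq l; lra.
apply: affdim_ge_sub dim_on => x [Sx x_on]; split=> //.
by have := center_eq x; move: x_on; rewrite /on_lift; lra.
Qed.

Lemma delaunay_mem_sphere S c r x :
  empty_sphere S c r -> S x -> conv (sphere_pts S c r) x -> sphere_pts S c r x.
Proof.
move=> [_ emptySc] Sx /conv_ball ball_x; split=> //; apply/eqP; rewrite eq_le.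
by rewrite emptySc // andbT; apply: ball_x => y [_ ->].
Qed.

End Lift.

Lemma int_box_finite n (N : nat) : exists s : seq 'rV[int]_n,
  forall z : 'rV[int]_n, (forall i j, absz (z i j) <= N)%N -> z \in s.
Proof.
pose shift (f : {ffun 'I_n -> 'I_(N + N).+1}) : 'rV[int]_n :=
  \row_j ((f j : nat)%:Z - N%:Z).
exists (map shift (enum {ffun 'I_n -> 'I_(N + N).+1})) => z z_le.
pose f := [ffun j => inord (absz (z 0 j + N%:Z)) : 'I_(N + N).+1].
have -> : z = shift f.
  apply/matrixP => i j; rewrite (ord1 i) !mxE ffunE inordK; have := z_le 0 j; lia.
by rewrite map_f ?mem_enum.
Qed.

Section Lattice.
Variables (R : realType) (n : nat) (B : 'M[R]_n).
Notation pt := 'rV[R]_n.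
Notation L := (lattice_of B).
Notation intmx z := (map_mx (fun k : int => k%:~R : R) z).

Lemma lattice_ofD x y : L x -> L y -> L (x + y).
Proof. by move=> [z1 ->] [z2 ->]; exists (z1 + z2); rewrite map_mxD mulmxDl. Qed.

Lemma lattice_ofN x : L x -> L (- x).
Proof. by move=> [z ->]; exists (- z); rewrite map_mxN mulNmx. Qed.

Lemma lattice_ofB x y : L x -> L y -> L (x - y).
Proof. by move=> Lx Ly; apply/lattice_ofD/lattice_ofN. Qed.

Hypothesis B_unit : B \in unitmx.

Lemma lattice_ball_finite (K : R) : exists s : seq pt,
  forall l, L l -> dotv l l <= K -> l \in s.
Proof.
(* The coordinates of [l] in the basis [B] are the [l.c_j], with [c_j] the
   columns of [B^-1], and [2 |l.c_j| <= l.l + c_j.c_j]. *)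
pose c (j : 'I_n) : pt := (col j (invmx B))^T.
pose N := Num.Def.archi_bound (`|K| + \sum_j dotv (c j) (c j)).
have [s s_box] := int_box_finite n N.
exists (map (fun z => intmx z *m B) s) => _ [z ->] le_K.
apply: map_f; apply: s_box => i j; rewrite (ord1 i).
have zj : (z 0 j)%:~R = dotv (intmx z *m B) (c j).
  have /matrixP/(_ 0 j) : intmx z = intmx z *m B *m invmx B by rewrite mulmxK.
  rewrite mxE => ->.
  by rewrite mxE dotvE; apply: eq_bigr => k _; rewrite !mxE.
have cj_le : dotv (c j) (c j) <= \sum_j dotv (c j) (c j).
  by rewrite (bigD1 j) //= lerDl sumr_ge0 // => k _; apply: dotvv_ge0.
have : `|(z 0 j)%:~R : R| < N%:R.
  apply: le_lt_trans (archi_boundP _); last first.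
    by rewrite addr_ge0 // sumr_ge0 // => k _; apply: dotvv_ge0.
  have := dotv2_le (intmx z *m B) (c j); have := dotv2_le (intmx z *m B) (- c j).
  rewrite dotvNr dotvNl dotvNr opprK -zj ler_norml; have := ler_norm K; lra.
by rewrite -intr_norm -(natr_absz _) ltr_nat => /ltnW.
Qed.

End Lattice.

Lemma seq_argmin_in (T : eqType) (R : realDomainType) (P : T -> Prop) (g : T -> R)
    (s : seq T) :
  (exists2 x, x \in s & P x) ->
  exists x, [/\ x \in s, P x & forall y, y \in s -> P y -> g x <= g y].
Proof.
elim: s => [[x] //|h t IH] ex_s.
have [[x x_in Px]|no_t] := classic (exists2 x, x \in t & P x); last first.
  have Ph : P h by case: ex_s => x /predU1P [-> //|x_in Px]; case: no_t; exists x.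
  exists h; split=> [||y /predU1P [-> //|y_in Py]]; rewrite ?mem_head //.
  by case: no_t; exists y.
have [y [y_in Py y_min]] := IH (ex_intro2 _ _ x x_in Px).
have [[Ph lt_hy]|not_better] := classic (P h /\ g h < g y).
  exists h; split=> [||z /predU1P [-> //|z_in Pz]]; rewrite ?mem_head //.
  exact: le_trans (ltW lt_hy) (y_min z z_in Pz).
exists y; split=> [||z /predU1P [->|]]; rewrite ?inE ?y_in ?orbT //; last exact: y_min.
by move=> Ph; rewrite leNgt; apply/negP => lt_hy; apply: not_better.
Qed.

Section Raise.
Variables (R : realType) (n : nat) (B : 'M[R]_n).
Notation pt := 'rV[R]_n.
Notation L := (lattice_of B).
Hypothesis B_unit : B \in unitmx.

(* The raising amount is the least ratio [slack l / (d.l + eps)]; the minimum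
   is attained since only finitely many lattice points can beat [l0]. *)
Lemma lift_raise (S : pt -> Prop) u beta d eps l0 :
  (forall l, S l -> L l) -> empty_lift S u beta -> S l0 -> 0 < dotv d l0 + eps ->
  exists s l1, [/\ 0 <= s, S l1, 0 < dotv d l1 + eps,
    empty_lift S (u + s *: d) (beta + s * eps) & on_lift (u + s *: d) (beta + s * eps) l1].
Proof.
move=> SL empty_u Sl0 pos_l0.
pose slack l := dotv l l - (dotv u l + beta).
pose rho l := slack l / (dotv d l + eps).
have slack_ge0 l : S l -> 0 <= slack l by move/empty_u; rewrite /slack subr_ge0.
have raisedE s l :
    dotv (u + s *: d) l + (beta + s * eps) = dotv l l - slack l + s * (dotv d l + eps).
  by rewrite dotvDl dotvZl /slack; ring.
have rho_le s l : 0 < dotv d l + eps -> (rho l <= s) = (slack l <= s * (dotv d l + eps)).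
  by move=> pos_l; rewrite ler_pdivrMr.
have [cands candsP] := lattice_ball_finite B_unit
  (dotv (u + rho l0 *: d) (u + rho l0 *: d) + 2 * (beta + rho l0 * eps)).
have cand_in l : S l -> 0 < dotv d l + eps -> rho l <= rho l0 -> l \in cands.
  move=> Sl pos_l; rewrite rho_le // => le_l; apply: candsP; first exact: SL.
  by have := dotv2_le (u + rho l0 *: d) l; have := raisedE (rho l0) l; lra.
have l0_in : l0 \in cands by exact: cand_in.
have [l1 [_ [Sl1 pos_l1] l1_min]] :=
  seq_argmin_in rho (ex_intro2 _ (fun l => S l /\ _) l0 l0_in (conj Sl0 pos_l0)).
have rho1_ge0 : 0 <= rho l1 by rewrite divr_ge0 ?slack_ge0 ?ltW.
exists (rho l1), l1; split=> // [l Sl|]; rewrite /on_lift raisedE; last first.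
  by rewrite /rho divfK ?gt_eqF //; ring.
have [neg_l|pos_l] := lerP (dotv d l + eps) 0.
  have : rho l1 * (dotv d l + eps) <= 0 by rewrite mulr_ge0_le0.
  by have := slack_ge0 l Sl; lra.
suff : rho l1 <= rho l by rewrite {2}/rho ler_pdivlMr //; lra.
have [le_l0|lt_l0] := lerP (rho l) (rho l0); first by apply: l1_min => //; exact: cand_in.
exact: le_trans (l1_min l0 l0_in (conj Sl0 pos_l0)) (ltW lt_l0).
Qed.

End Raise.

Section HyperplaneLifts.
Variables (R : realType) (m : nat) (B : 'M[R]_m.+1) (a : 'rV[R]_m.+1).
Notation pt := 'rV[R]_m.+1.
Notation L := (lattice_of B).
Notation LH := (fun x => lattice_of B x /\ hyperplane a 0 x).
Hypothesis B_unit : B \in unitmx.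
Hypothesis a_neq0 : a != 0.

Lemma layer_frame_colinear s0 (f : 'I_m -> pt) v :
  indep f -> hyperplane a 0 s0 -> (forall i, hyperplane a 0 (s0 + f i)) ->
  (forall i, dotv v (f i) = 0) -> v = (dotv v a / dotv a a) *: a.
Proof.
move=> indep_f Hs0 Hf vf0; apply: (orth_indep_colinear a_neq0 indep_f _ vf0) => i.
by have := Hf i; rewrite /hyperplane dotvDr Hs0 add0r.
Qed.

Hypothesis LH_dim : affdim_ge LH m.

Lemma orth_not_const_on_layer (d : pt) s0 : d != 0 -> dotv d a = 0 -> LH s0 ->
  exists l, LH l /\ dotv d (l - s0) != 0.
Proof.
move=> d0 da0 LHs0; apply: NNPP => d_const.
have d_val l : LH l -> dotv d l = dotv d s0.
  move=> LHl; apply/eqP; rewrite -subr_eq0 -dotvBr; apply: contraT => dl.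
  by case: d_const; exists l.
have /affdim_geP [q0 [g [LHq0 LHg indep_g]]] := LH_dim.
have d_g i : dotv d (g i) = 0.
  by have := d_val _ (LHg i); rewrite dotvDr d_val //; lra.
have := layer_frame_colinear indep_g LHq0.2 (fun i => (LHg i).2) d_g.
by rewrite da0 mul0r scale0r => d_eq0; rewrite d_eq0 eqxx in d0.
Qed.

Lemma raise_direction k s0 (f : 'I_k -> pt) y : (k < m)%N -> LH s0 ->
  exists d l, [/\ dotv d a = 0, forall i, dotv d (f i) = 0,
    0 <= dotv d (y - s0), LH l & 0 < dotv d (l - s0)].
Proof.
move=> lt_km [Ls0 Hs0].
have [d0 d0_neq0 d0_orth] := orth_vector_exists (rcons_fam f a) (lt_km : (k.+1 < m.+1)%N).
have [d [d_neq0 d_a d_f d_y]] : exists d, [/\ d != 0, dotv d a = 0,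
    forall i, dotv d (f i) = 0 & 0 <= dotv d (y - s0)].
  have d0_a : dotv d0 a = 0 by rewrite -(rcons_fam_max f a) d0_orth.
  have d0_f i : dotv d0 (f i) = 0 by rewrite -(rcons_fam_lift f a) d0_orth.
  have [y_pos|y_neg] := lerP 0 (dotv d0 (y - s0)); first by exists d0.
  exists (- d0); rewrite oppr_eq0 !dotvNl d0_a oppr0 oppr_ge0 ltW //; split=> // i.
  by rewrite dotvNl d0_f oppr0.
exists d; have [l [[Ll Hl] dl_neq0]] := orth_not_const_on_layer d_neq0 d_a (conj Ls0 Hs0).
have [dl_pos|dl_neg] := ltrP 0 (dotv d (l - s0)); first by exists l.
exists (s0 + s0 - l); split=> //.
  split; first by apply: lattice_ofB => //; apply: lattice_ofD.
  by rewrite /hyperplane dotvBr dotvDr Hs0 Hl !subr0 addr0.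
rewrite (_ : s0 + s0 - l - s0 = - (l - s0)); last by rewrite opprB addrAC addrK.
by rewrite dotvNr oppr_gt0 lt_neqAle dl_neg andbT.
Qed.

Variables (z u0 : pt) (beta0 : R).

(* Stage [k] of the growth of [(u0, beta0)] inside the hyperplane; at stage [m]
   it defines a Delaunay polytope of [L /\ H]. *)
Definition dominating_lift k := exists u beta,
  [/\ dotv a u = 0, empty_lift LH u beta, affdim_ge (fun x => LH x /\ on_lift u beta x) k
    & dotv u0 z + beta0 <= dotv u z + beta].

Hypothesis a_u0 : dotv a u0 = 0.
Hypothesis empty_u0 : empty_lift LH u0 beta0.

Lemma dominating_lift0 : dominating_lift 0.
Proof.
have [l0 [Ll0 Hl0]] : exists l0, LH l0 by case: LH_dim => p [LHp _]; exists (p ord0).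
have pos_l0 : 0 < dotv 0 l0 + 1 by rewrite dotv0l add0r.
have [s [l1 [s_ge0 LHl1 _ empty1 on_l1]]] :=
  lift_raise B_unit (S := LH) (fun _ => @proj1 _ _) empty_u0 (conj Ll0 Hl0) pos_l0.
move: empty1 on_l1; rewrite scaler0 addr0 mulr1 => empty1 on_l1.
exists u0, (beta0 + s); split=> //; last lra.
by apply/affdim_geP; exists l1, (fun _ => 0); split=> // [[] //|al _ []].
Qed.

Lemma dominating_liftS k : (k < m)%N -> dominating_lift k -> dominating_lift k.+1.
Proof.
move=> lt_km [u [beta [a_u empty_u /affdim_geP [s0 [f [[LHs0 on_s0] on_f indep_f]]] dom_z]]].
have [d [l [d_a d_f d_z LHl pos_l]]] := raise_direction f z lt_km LHs0.
have pos_l' : 0 < dotv d l + - dotv d s0 by rewrite -dotvBr.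
have [s [l1 [s_ge0 LHl1 pos_l1 empty1 on_l1]]] :=
  lift_raise B_unit (S := LH) (fun _ => @proj1 _ _) empty_u LHl pos_l'.
have keep x : dotv d (x - s0) = 0 -> on_lift u beta x ->
    on_lift (u + s *: d) (beta + s * - dotv d s0) x.
  rewrite /on_lift dotvDl dotvZl dotvBr => /eqP; rewrite subr_eq0 => /eqP dx <-.
  by rewrite dx; lra.
exists (u + s *: d), (beta + s * - dotv d s0); split=> //.
- by rewrite dotvDr dotvZr a_u (dotvC a) d_a mulr0 addr0.
- apply/affdim_geP; exists s0, (rcons_fam f (l1 - s0)); split.
  + by split=> //; apply: keep; rewrite ?subrr ?dotv0r.
  + apply: (rcons_famP (P := fun y => LH (s0 + y) /\ on_lift _ _ (s0 + y))) => [i|].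
      by have [LHf on_fi] := on_f i; split=> //; apply: keep; rewrite // addrC addKr d_f.
    by rewrite addrC subrK.
  + by apply: indep_rcons indep_f d_f _; rewrite dotvBr gt_eqF.
- have : 0 <= s * dotv d (z - s0) by rewrite mulr_ge0.
  by rewrite dotvDl dotvZl dotvBr; lra.
Qed.

Lemma dominating_lift_full : dominating_lift m.
Proof.
suff : forall k, (k <= m)%N -> dominating_lift k by apply.
elim=> [|k IHk] le_km; first exact: dominating_lift0.
by apply: dominating_liftS le_km (IHk (ltnW le_km)).
Qed.

End HyperplaneLifts.

Section Lamina.
Variables (R : realType) (m : nat) (B : 'M[R]_m.+1) (a : 'rV[R]_m.+1).
Notation pt := 'rV[R]_m.+1.
Notation L := (lattice_of B).
Notation LH := (fun x => lattice_of B x /\ hyperplane a 0 x).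
Hypothesis lamina_a : lamina B a.

Lemma lamina_lift_extends u beta :
  dotv a u = 0 -> empty_lift LH u beta ->
  affdim_ge (fun x => LH x /\ on_lift u beta x) m ->
  exists u' beta' k, [/\ k != 0, empty_lift L u' beta',
    forall t, hyperplane a 0 t -> dotv u' t + beta' = dotv u t + beta
    & forall t, L t -> on_lift u' beta' t -> k * dotv a t <= 0].
Proof.
move=> a_u empty_u dim_on; have [a_neq0 [_ facets]] := lamina_a.
have H_center : hyperplane a 0 (lift_center u) by rewrite /hyperplane dotvZr a_u mulr0.
have [P' [[cP [rP [_ [emptyP [_ P'E]]]]] [[a' [b [a'_neq0 [P'_le Q_face]]]] _]]] :=
  facets _ (delaunay_of_lift H_center empty_u dim_on).
have emptyP' := empty_sphere_lift emptyP.
set u' := 2 *: cP; set beta' := rP ^+ 2 - dotv cP cP.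
have touch x : LH x -> on_lift u beta x -> on_lift u' beta' x /\ dotv a' x = b.
  move=> LHx on_x; have [/P'E P'x a'x] : P' x /\ dotv a' x = b.
    apply/Q_face/mem_conv; split=> //; apply/eqP; rewrite -subr_eq0.
    by rewrite (lift_sqr_center _ on_x) on_x subrr.
  by split=> //; have /sphere_pts_lift [] := delaunay_mem_sphere emptyP LHx.1 P'x.
have /affdim_geP [s0 [f [[LHs0 on_s0] on_f indep_f]]] := dim_on.
have [on'_s0 a's0] := touch s0 LHs0 on_s0.
(* [u' - u] and [a'] are orthogonal to the frame [f], hence multiples of [a]. *)
have frame v := layer_frame_colinear a_neq0 indep_f LHs0.2 (fun i => (on_f i).1.2) (v := v).
have touch_f i := touch _ (on_f i).1 (on_f i).2.
have uu'_f i : dotv (u' - u) (f i) = 0.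
  have [on'_fi _] := touch_f i; move: on'_fi on'_s0 (on_f i).2 on_s0.
  by rewrite /on_lift !dotvDr dotvBl; lra.
have a'_f i : dotv a' (f i) = 0.
  by have [_] := touch_f i; rewrite dotvDr a's0; lra.
have a'_a := frame a' a'_f; set k := dotv a' a / dotv a a in a'_a.
have b0 : b = 0 by rewrite -a's0 a'_a dotvZl LHs0.2 mulr0.
exists u', beta', k; split=> // [|t Ht|t Lt on'_t].
- by apply: contraNneq a'_neq0 => k0; rewrite a'_a k0 scale0r.
- have uu' := frame _ uu'_f; move: on'_s0 on_s0; rewrite /on_lift.
  have : dotv (u' - u) t = dotv (u' - u) s0 by rewrite uu' !dotvZl Ht LHs0.2.
  by rewrite !dotvBl; lra.
- have /P'E/P'_le : conv (sphere_pts L cP rP) t by apply/mem_conv/sphere_pts_lift.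
  by rewrite a'_a dotvZl b0.
Qed.

Hypothesis B_unit : B \in unitmx.

Lemma empty_sphere_not_across c r x y :
  empty_sphere L c r -> sphere_pts L c r x -> sphere_pts L c r y ->
  dotv a x < 0 -> 0 < dotv a y -> False.
Proof.
move=> emptyc /sphere_pts_lift [Lx on_x] /sphere_pts_lift [Ly on_y] ax ay.
have [a_neq0 [LH_dim _]] := lamina_a.
have [t [t01 z_H]] := segment_meets_hyperplane ax ay.
set z := t *: x + (1 - t) *: y in z_H.
set beta0 := r ^+ 2 - dotv c c in on_x on_y.
pose u0 := 2 *: c - (dotv (2 *: c) a / dotv a a) *: a.
have u0_H v : dotv a v = 0 -> dotv u0 v = dotv (2 *: c) v.
  by move=> av; rewrite dotvBl !dotvZl av mulr0 subr0.
have a_u0 : dotv a u0 = 0.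
  by rewrite dotvC dotvBl !dotvZl mulfVK ?dotvv_eq0 // subrr.
have empty_u0 : empty_lift LH u0 beta0.
  by move=> l [Ll Hl]; rewrite u0_H //; exact: (empty_sphere_lift emptyc Ll).
have [u [beta [a_u empty_u dim_on dom_z]]] :=
  dominating_lift_full B_unit a_neq0 LH_dim z a_u0 empty_u0.
have [u' [beta' [k [k_neq0 empty' agree k_side]]]] := lamina_lift_extends a_u empty_u dim_on.
have [x_on' y_on'] : on_lift u' beta' x /\ on_lift u' beta' y.
  have below v : L v -> on_lift (2 *: c) beta0 v ->
      dotv (u' - 2 *: c) v + (beta' - beta0) <= 0.
    by move=> Lv; rewrite /on_lift dotvBl; have := empty' v Lv; lra.
  have := affine_zero_on_segment t01 (below x Lx on_x) (below y Ly on_y).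
  rewrite -/z dotvBl -(u0_H z z_H) => /(_ _) [|]; first by have := agree z z_H; lra.
  by move: on_x on_y; rewrite /on_lift !dotvBl; lra.
have := k_side x Lx x_on'; have := k_side y Ly y_on'.
by case/orP: (lt_total k_neq0) => k_sgn; nra.
Qed.

Lemma empty_sphere_no_lattice_between c r x y v :
  empty_sphere L c r -> sphere_pts L c r x -> sphere_pts L c r y -> L v ->
  ~ (dotv a x < dotv a v < dotv a y).
Proof.
move=> [r_ge0 emptyc] [Lx Sx] [Ly Sy] Lv /andP [xv vy].
have shift w : w - v - (c - v) = w - c by rewrite opprB addrA subrK.
apply: (@empty_sphere_not_across (c - v) r (x - v) (y - v)).
- split=> // l Ll.
  by have := emptyc _ (lattice_ofD Ll Lv); rewrite -shift addrK.
- by split; [exact: lattice_ofB | rewrite shift].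
- by split; [exact: lattice_ofB | rewrite shift].
- by rewrite dotvBr subr_lt0.
- by rewrite dotvBr subr_gt0.
Qed.

Lemma empty_sphere_two_levels c r v1 v2 w :
  empty_sphere L c r -> sphere_pts L c r v1 -> sphere_pts L c r v2 ->
  dotv a v1 < dotv a v2 -> sphere_pts L c r w ->
  dotv a w = dotv a v1 \/ dotv a w = dotv a v2.
Proof.
move=> emptyc S1 S2 lt12 Sw.
have between := empty_sphere_no_lattice_between emptyc.
have [w1|w1|->] := ltrgtP (dotv a w) (dotv a v1); last by left.
  by case: (between _ _ _ Sw S2 S1.1); rewrite w1.
have [w2|w2|->] := ltrgtP (dotv a w) (dotv a v2); last by right.
  by case: (between _ _ _ S1 S2 Sw.1); rewrite w1.
by case: (between _ _ _ S1 Sw S2.1); rewrite lt12.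
Qed.

End Lamina.

Theorem mainTheorem2 (R : realType) (n : nat) (B : 'M[R]_n) (a : 'rV[R]_n) :
  B \in unitmx ->
  lamina B a ->
  forall P : 'rV[R]_n -> Prop,
    delaunay_in (fun _ => True) (lattice_of B) n P ->
    exists v1 v2 : 'rV[R]_n,
      lattice_of B v1 /\ lattice_of B v2 /\
      dotv a v1 < dotv a v2 /\
      (forall v, lattice_of B v -> ~ (dotv a v1 < dotv a v < dotv a v2)) /\
      (forall x, P x -> dotv a v1 <= dotv a x <= dotv a v2) /\
      (forall x, vertex P x -> dotv a x = dotv a v1 \/ dotv a x = dotv a v2).
Proof.
case: n B a => [|m] B a B_unit lamina_a P [c [r [_ [emptyc [dim_sph PE]]]]].
  by case: lamina_a; rewrite (thinmx0 a) eqxx.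
have [v1 [v2 [S1 S2 lt12]]] := affdim_full_not_level lamina_a.1 dim_sph.
have levels := empty_sphere_two_levels lamina_a B_unit emptyc S1 S2 lt12.
exists v1, v2; split; [exact: S1.1 | split; [exact: S2.1 | split=> //]].
split=> [v|]; first exact: (empty_sphere_no_lattice_between lamina_a B_unit emptyc S1 S2).
split=> x; first by move/PE; apply: conv_dotv_bounds => w /levels [] ->; rewrite lexx ltW.
move=> x_vtx; apply/levels/(vertex_conv_mem (fun y => proj2 (PE y)) x_vtx)/PE.
exact: x_vtx.1.
Qed.
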